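(* Let $n$ be a positive integer. There exists a positive integer $k$ such that the complete graph $K_n$ is a prime $k$th-power distance graph if and only if $n<7$.
   Context: A graph $G$ is a prime $k$th-power distance graph if there is an injective map $L:V(G)\to\mathbb{Z}$ such that for every edge $uv$ of $G$, $|L(u)-L(v)|=p^j$ for some prime $p$ and some positive integer $j\le k$. *)

From mathcomp Require Import all_boot all_order all_algebra.
Set Implicit Arguments. Unset Strict Implicit. Unset Printing Implicit Defensive.
Import Order.TTheory GRing.Theory Num.Theory.

Definition prime_kth_power_distance_graph (T : finType) (e : rel T) (k : nat) : Prop :=
  exists L : T -> int, injective L /\
    forall u v : T, e u v ->
      exists p j : nat, [/\ prime p, 0 < j, j <= k & `|L u - L v|%R = Posz (p ^ j)].

Definition complete_graph_rel (n : nat) : rel 'I_n := fun u v => u != v.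

From mathcomp Require Import all_boot all_order all_algebra.
Import Order.TTheory GRing.Theory Num.Theory.

(* Two integers congruent mod 6 differ by a multiple of 6 = 2 * 3, which no
   prime power is; so the labels of a clique with prime-power distances have
   pairwise distinct residues mod 6, and the clique has at most 6 vertices.
   Conversely, the labels 0, 2, 4, 7, 9, 11 have pairwise distances
   2, 3, 4 = 2^2, 5, 7, 9 = 3^2 and 11, all primes or squares of primes. *)

Lemma prime_power_ndvd6 {p j : nat} : prime p -> 0 < j -> ~~ (6 %| p ^ j).
Proof.
move=> p_pr j_gt0; apply/negP => dvd6.
have : 2 %| p ^ j by apply: dvdn_trans dvd6.
rewrite Euclid_dvdX // => /andP[dvd2 _].
have : 3 %| p ^ j by apply: dvdn_trans dvd6.
rewrite Euclid_dvdX // => /andP[dvd3 _].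
by rewrite dvdn_prime2 // in dvd2 dvd3; rewrite -(eqP dvd2) in dvd3.
Qed.

Lemma absz_modz_lt (m : int) {d : nat} : 0 < d -> absz (m %% d)%Z < d.
Proof.
move=> d_gt0; rewrite -ltz_nat gez0_abs ?modz_ge0 ?ltz_pmod //.
by rewrite eqz_nat -lt0n.
Qed.

Lemma card_prime_power_distance_clique (T : finType) (L : T -> int) :
  (forall u v : T, u != v -> exists p j : nat,
     [/\ prime p, 0 < j & `|L u - L v|%R = Posz (p ^ j)]) ->
  #|T| <= 6.
Proof.
move=> dist_pp.
pose residue u : 'I_6 := Ordinal (absz_modz_lt (L u) (isT : 0 < 6)).
suff /leq_card : injective residue by rewrite card_ord.
move=> u v /(congr1 val) /= eq_res; apply/eqP; apply: contraT => /dist_pp.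
case=> p [j [p_pr j_gt0 dist_uv]].
have : 6 %| absz (L u - L v).
  rewrite -(@dvdzE 6) -eqz_mod_dvd.
  by rewrite -[(L u %% 6)%Z]gez0_abs ?modz_ge0 // -[(L v %% 6)%Z]gez0_abs
    ?modz_ge0 // eq_res.
have -> : absz (L u - L v) = p ^ j by apply/eqP; rewrite -eqz_nat abszE dist_uv.
by rewrite (negbTE (prime_power_ndvd6 p_pr j_gt0)).
Qed.

Lemma complete_graph_prime_power_distance_le6 (n k : nat) :
  prime_kth_power_distance_graph (@complete_graph_rel n) k -> n <= 6.
Proof.
case=> L [_ dist_pp]; rewrite -[n]card_ord.
apply: (@card_prime_power_distance_clique _ L) => u v /dist_pp.
by case=> p [j [p_pr j_gt0 _ dist_uv]]; exists p, j.
Qed.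

Definition K6_labels : seq int := [:: 0; 2; 4; 7; 9; 11]%R.

Lemma K6_labels_prime_square_distance (a b : nat) :
  a < 6 -> b < 6 -> a != b -> exists p j : nat, [/\ prime p, 0 < j, j <= 2 &
    `|nth 0%R K6_labels a - nth 0%R K6_labels b|%R = Posz (p ^ j)].
Proof.
do 6?[case: a => [|a]]; do 6?[case: b => [|b]]; rewrite //= => _ _ _;
  first [ by exists 2, 1 | by exists 2, 2 | by exists 3, 1 | by exists 3, 2
        | by exists 5, 1 | by exists 7, 1 | by exists 11, 1 ].
Qed.

Lemma complete_graph_prime_square_distance (n : nat) :
  n <= 6 -> prime_kth_power_distance_graph (@complete_graph_rel n) 2.
Proof.
move=> n_le6; have lt6 (i : 'I_n) : i < 6 := leq_trans (ltn_ord i) n_le6.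
exists (fun i : 'I_n => nth 0%R K6_labels i); split.
  by move=> i j /eqP; rewrite nth_uniq ?lt6 // => /eqP/val_inj.
by move=> u v; apply: K6_labels_prime_square_distance; rewrite ?lt6.
Qed.

Theorem mainTheorem10 (n : nat) (hn : 0 < n) :
  (exists k : nat, 0 < k /\ prime_kth_power_distance_graph (@complete_graph_rel n) k)
  <-> n < 7.
Proof.
split=> [[k [_ /complete_graph_prime_power_distance_le6 //]] | n_lt7].
by exists 2; split; last exact: complete_graph_prime_square_distance.
Qed.
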